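(* For Pólya trees $t$ let $S_t$, $T$ be as in the context. Then \[ \sum_{\substack{t \in \mathcal{P}_{\le n}\\ |t| \ge \log n}} \left(1 - \frac{[z^n]S_t(z)}{[z^n]T(z)}\right) = \Omega\!\left(\sqrt{n}\right) \quad \text{as } n\to\infty, \] where $\log$ denotes the logarithm to base $1/\sigma$.
   Context: A recursive tree of size $n$ is a rooted non-plane tree with $n$ nodes labeled $1,\dots,n$ with labels increasing along every path from the root; their exponential generating function is $T(z)=\ln\frac{1}{1-z}$, so $[z^n]T(z)=1/n$. A Pólya tree is an unlabeled rooted non-plane tree; $\mathcal{P}_{\le n}$ is the set of Pólya trees with at most $n$ nodes; $\sigma\approx 0.338$ is the radius of convergence of the ordinary generating function of Pólya trees. A fringe subtree is a node together with all its descendants; its shape is the Pólya tree obtained by forgetting labels. For a Pólya tree $t$ with $k$ nodes, $\ell(t)$ is the number of increasing labelings of $t$ by $1,\dots,k$, $w(t)=\ell(t)/k!$ and $P_t(z)=w(t)z^k$. $S_t(z)$ is the exponential generating function of recursive trees having no fringe subtree of shape $t$; it is the solution of $S_t'(z)=\exp(S_t(z))-P_t'(z)$, $S_t(0)=0$, explicitly $S_t(z)=\ln\frac{1}{1-\int_0^z e^{-P_t(v)}\,dv}-P_t(z)$. *)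

From Stdlib Require Import Reals.
From Coquelicot Require Import Rbar Hierarchy PSeries.
From HB Require Import structures.
From mathcomp Require Import all_boot.

Set Implicit Arguments.
Unset Strict Implicit.
Unset Printing Implicit Defensive.
Local Open Scope nat_scope.

(* Rooted trees.  A [tree] is a rooted *plane* tree (ordered children); *)
(* Pólya trees (unlabeled rooted non-plane trees) are the isomorphism   *)
(* classes, represented below by canonical forms.                      *)
Inductive tree := Node of seq tree.

Fixpoint tree_to_gen (t : tree) : GenTree.tree unit :=
  let: Node l := t in GenTree.Node 0 (map tree_to_gen l).

Fixpoint gen_to_tree (g : GenTree.tree unit) : tree :=
  match g with
  | GenTree.Leaf _ => Node [::]
  | GenTree.Node _ l => Node (map gen_to_tree l)
  end.

Lemma tree_to_genK : cancel tree_to_gen gen_to_tree.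
Proof.
rewrite /cancel; fix IH 1; case=> l /=; congr Node.
move: l; fix IHl 1; case=> [|a l] //=.
by rewrite IH IHl.
Qed.

HB.instance Definition _ := Countable.copy tree (can_type tree_to_genK).

Fixpoint tree_size (t : tree) : nat :=
  let: Node l := t in (sumn (map tree_size l)).+1.

Definition tree_le (a b : tree) : bool := (pickle a <= pickle b)%N.

Fixpoint canon (t : tree) : tree :=
  let: Node l := t in Node (sort tree_le (map canon l)).

Definition same_shape (a b : tree) : bool := canon a == canon b.

Definition polya (t : tree) : bool := canon t == t.

Definition enumerates_polya (e : nat -> seq tree) : Prop :=
  forall n, uniq (e n) /\ forall t, (t \in e n) = polya t && (tree_size t <= n)%N.

Definition polya_count (e : nat -> seq tree) (k : nat) : nat :=
  count (fun t => tree_size t == k) (e k).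

Definition sigma_of (e : nat -> seq tree) : R :=
  real (CV_radius (fun k => INR (polya_count e k))).

(* Recursive trees of size n.  Nodes are 'I_n (label i+1 <-> i); such a *)
(* tree is its parent map f, with f 0 = 0 (root) and f i < i otherwise. *)
Definition is_rectree (n : nat) (f : {ffun 'I_n -> 'I_n}) : bool :=
  (0 < n)%N && [forall i : 'I_n,
     if (i == 0 :> nat) then f i == i else (f i < i)%N].

Definition children (n : nat) (f : {ffun 'I_n -> 'I_n}) (v : 'I_n) : seq 'I_n :=
  [seq u : 'I_n <- enum 'I_n | (val v < val u)%N && (f u == v)].

Fixpoint shape_aux (n : nat) (f : {ffun 'I_n -> 'I_n}) (k : nat) (v : 'I_n)
  : tree :=
  match k with
  | 0 => Node [::]
  | k'.+1 => Node (map (shape_aux f k') (children f v))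
  end.

(* shape of the fringe subtree rooted at v (fuel n suffices: depth < n) *)
Definition fringe_shape (n : nat) (f : {ffun 'I_n -> 'I_n}) (v : 'I_n) : tree :=
  shape_aux f n v.

Definition has_fringe (n : nat) (f : {ffun 'I_n -> 'I_n}) (t : tree) : bool :=
  [exists v : 'I_n, same_shape (fringe_shape f v) t].

(* [z^n] T(z): EGF coefficient of recursive trees (= 1/n for n >= 1) *)
Definition coef_T (n : nat) : R :=
  Rdiv (INR #|[set f : {ffun 'I_n -> 'I_n} | is_rectree f]|) (INR n`!).

Definition coef_S (t : tree) (n : nat) : R :=
  Rdiv (INR #|[set f : {ffun 'I_n -> 'I_n} | is_rectree f && ~~ has_fringe f t]|)
       (INR n`!).

Definition Rleb (x y : R) : bool := if Rle_dec x y then true else false.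

Definition log_base (b x : R) : R := Rdiv (ln x) (ln b).

(* Attaching node n+1 to a uniformly random node of a random recursive tree of
   size n gives exact recurrences for the number X_k of fringe subtrees of
   size k: E X_k = n/(k(k+1)) for k < n and, since two distinct nodes whose
   subtrees have the same size are incomparable,
   E X_k(X_k - 1) <= (n/(k(k+1)))^2.  For k in the window
   sqrt n < k <= 5 sqrt n / 4 this gives
   P(X_k > 0) >= E X_k - E X_k(X_k - 1)/2 >= E X_k / 2 >= 1/4.  Fringe subtrees
   of different sizes have different shapes, and these sizes eventually exceed
   any logarithm of n, so the sum in the theorem, which is the expected number
   of distinct shapes of fringe subtrees of size at least log n, is at least
   sqrt n / 16 - O(1). *)

From Stdlib Require Import Reals Lra Psatz.
From Coquelicot Require Import Rcomplements Rbar Continuity ElemFct.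
From HB Require Import structures.
From mathcomp Require Import all_boot zify.

Set Implicit Arguments.
Unset Strict Implicit.
Unset Printing Implicit Defensive.
Local Open Scope nat_scope.

Lemma tree_ind_mem (P : tree -> Prop) :
  (forall l, (forall x, x \in l -> P x) -> P (Node l)) -> forall t, P t.
Proof.
move=> IHnode; fix IH 1; case=> l; apply: IHnode.
move: l; fix IHl 1; case=> [|a l] x hx.
  by exfalso; rewrite in_nil in hx.
move: hx; rewrite inE => /predU1P [->|hx]; [exact: IH | exact: IHl l x hx].
Qed.

Lemma tree_size_canon t : tree_size (canon t) = tree_size t.
Proof.
elim/tree_ind_mem: t => l IH /=; congr S.
rewrite !sumnE !big_map (perm_big _ (permEl (perm_sort _ _))) /= big_map.
by apply: eq_big_seq => x /IH.
Qed.

Lemma canon_idem t : canon (canon t) = canon t.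
Proof.
elim/tree_ind_mem: t => l IH /=; congr Node.
have -> : map canon (sort tree_le (map canon l)) = sort tree_le (map canon l).
  rewrite -[RHS]map_id; apply/eq_in_map => x.
  by rewrite mem_sort => /mapP [y /IH yl ->].
have tree_le_trans : transitive tree_le by move=> ? ? ?; apply: leq_trans.
have tree_le_total : total tree_le by move=> ? ?; apply: leq_total.
exact/(sorted_sort tree_le_trans)/(sort_sorted tree_le_total).
Qed.

(** * Ancestry in recursive trees *)

Section Ancestry.

Variable n : nat.
Implicit Types (f : {ffun 'I_n -> 'I_n}) (u v w : 'I_n).

Definition ancestor f v w : bool := [exists j : 'I_n, iter j f w == v].

Definition incomparable f v w : bool := ~~ ancestor f v w && ~~ ancestor f w v.

Definition subtree_size f v : nat := \sum_w ancestor f v w.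

Definition is_child f v w : bool := (v < w) && (f w == v).

Variable f : {ffun 'I_n -> 'I_n}.
Hypothesis f_rec : is_rectree f.

Lemma rectree_gt0 : 0 < n.
Proof. by case/andP: f_rec. Qed.

Lemma rectree_root v : v = 0 :> nat -> f v = v.
Proof. by move=> v0; case/andP: f_rec => _ /forallP /(_ v); rewrite v0 eqxx => /eqP. Qed.

Lemma rectree_parent_lt v : v != 0 :> nat -> f v < v.
Proof. by move=> v0; case/andP: f_rec => _ /forallP /(_ v); rewrite (negbTE v0). Qed.

Lemma rectree_parent_le v : f v <= v - 1.
Proof.
have [v0|v0] := eqVneq (v : nat) 0; first by rewrite rectree_root // v0.
by have := rectree_parent_lt v0; lia.
Qed.

Lemma iter_parent_le j w : iter j f w <= w - j.
Proof.
elim: j => [|j IH]; first by rewrite subn0.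
by rewrite iterS; have := rectree_parent_le (iter j f w); lia.
Qed.

Lemma ancestorP v w : reflect (exists j, iter j f w = v) (ancestor f v w).
Proof.
apply: (iffP existsP) => [[j /eqP <-]|[j <-]]; first by exists j.
have [jn|nj] := ltnP j n; first by exists (Ordinal jn).
exists w; apply/eqP/ord_inj.
by have := iter_parent_le j w; have := iter_parent_le w w; have := ltn_ord w; lia.
Qed.

Lemma ancestor_refl v : ancestor f v v.
Proof. by apply/ancestorP; exists 0. Qed.

Lemma incomparablexx v : incomparable f v v = false.
Proof. by rewrite /incomparable ancestor_refl. Qed.

Lemma ancestor_trans u v w : ancestor f u v -> ancestor f v w -> ancestor f u w.
Proof.
by move=> /ancestorP [i <-] /ancestorP [j <-]; apply/ancestorP; exists (i + j); rewrite iterD.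
Qed.

Lemma ancestor_leq v w : ancestor f v w -> v <= w.
Proof. by move=> /ancestorP [j <-]; have := iter_parent_le j w; lia. Qed.

Lemma ancestor_anti v w : ancestor f v w -> ancestor f w v -> v = w.
Proof. by move=> vw wv; apply/val_inj/eqP; rewrite eqn_leq !ancestor_leq. Qed.

Lemma ancestor_total u v w :
  ancestor f u w -> ancestor f v w -> ancestor f u v || ancestor f v u.
Proof.
move=> /ancestorP [i <-] /ancestorP [j <-]; have [ij|ji] := leqP i j.
  by apply/orP; right; apply/ancestorP; exists (j - i); rewrite -iterD subnK.
by apply/orP; left; apply/ancestorP; exists (i - j); rewrite -iterD subnK // ltnW.
Qed.

Lemma ancestor_root (r : 'I_n) w : r = 0 :> nat -> ancestor f r w.
Proof.
move=> r0; apply/ancestorP; exists w; apply/ord_inj; rewrite r0.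
by have := iter_parent_le w w; lia.
Qed.

Lemma ancestor_parent v w : ancestor f v w -> w != v -> ancestor f v (f w).
Proof.
move=> /ancestorP [[/= ->|j]]; first by rewrite eqxx.
by rewrite iterSr => <- _; apply/ancestorP; exists j.
Qed.

Lemma ancestor_child v w : is_child f v w -> ancestor f v w.
Proof. by case/andP=> _ /eqP <-; apply/ancestorP; exists 1. Qed.

Lemma ancestor_child_uniq v w c c' : is_child f v c -> is_child f v c' ->
  ancestor f c w -> ancestor f c' w -> c = c'.
Proof.
have no_nested x y : is_child f v x -> is_child f v y -> x != y -> ~~ ancestor f x y.
  move=> /andP [vx _] /andP [_ /eqP fy] xy; apply/negP => /ancestor_parent.
  by rewrite eq_sym => /(_ xy) /ancestor_leq; rewrite fy; lia.
move=> hc hc' cw c'w; apply/eqP/negPn/negP => cc'.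
case/orP: (ancestor_total cw c'w); apply/negP; first exact: no_nested.
by apply: no_nested; rewrite // eq_sym.
Qed.

Lemma is_child_parent c : f c != c -> is_child f (f c) c.
Proof.
move=> fc; rewrite /is_child eqxx andbT rectree_parent_lt //.
by apply: contra_neq fc; apply: rectree_root.
Qed.

Lemma sum_child_ancestor v w :
  \sum_(c | is_child f v c) ancestor f c w = (w != v) && ancestor f v w.
Proof.
have [/andP [wv vw]|not_desc] := boolP ((w != v) && ancestor f v w); last first.
  apply: big1 => c vc; have [cw|] // := boolP (ancestor f c w).
  case/negP: not_desc.
  rewrite (ancestor_trans (ancestor_child vc) cw) andbT.
  by apply: contraTneq (ancestor_leq cw) => ->; case/andP: vc; rewrite -ltnNge.
have ex_j : exists j, iter j f w == v by case/ancestorP: vw => j <-; exists j.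
have [[|j] // /eqP jv min_j] := ex_minnP ex_j; first by rewrite -jv eqxx in wv.
pose c := iter j f w.
have fc : f c = v by rewrite -jv iterS.
have cv : c != v by apply/eqP => cv; have := min_j j; rewrite -/c cv eqxx ltnn => /(_ isT).
have vc : is_child f v c by rewrite -fc is_child_parent // fc eq_sym.
have cw : ancestor f c w by apply/ancestorP; exists j.
rewrite (bigD1 c) //= cw big1 // => c' /andP [vc' c'c].
have [c'w|] // := boolP (ancestor f c' w).
by rewrite (ancestor_child_uniq vc' vc c'w cw) eqxx in c'c.
Qed.

Lemma subtree_sizeE v : subtree_size f v = 1 + \sum_(c | is_child f v c) subtree_size f c.
Proof.
rewrite /subtree_size exchange_big /=.
under [X in _ = 1 + X]eq_bigr => w _ do rewrite sum_child_ancestor.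
rewrite (bigD1 v) //= ancestor_refl (bigD1 v (isT : true)) /= eqxx /=; congr (_ + _).
by apply: eq_bigr => w ->.
Qed.

Lemma subtree_size_gt0 v : 0 < subtree_size f v.
Proof. by rewrite subtree_sizeE. Qed.

Lemma tree_size_fringe v : tree_size (fringe_shape f v) = subtree_size f v.
Proof.
suff shapeE k u : n <= k + u -> tree_size (shape_aux f k u) = subtree_size f u.
  by apply: shapeE; rewrite leq_addr.
elim: k u => [|k IH] u; first by rewrite add0n; have := ltn_ord u; lia.
move=> ku /=; rewrite subtree_sizeE add1n sumnE !big_map /children big_filter.
rewrite big_enum_cond; congr S; apply: eq_bigr => c /and3P [_ uc _].
by apply: IH; have : u < c := uc; lia.
Qed.

Lemma incomparable_not_ancestor2 v w u :
  incomparable f v w -> ~~ (ancestor f v u && ancestor f w u).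
Proof.
case/andP=> /negP vw /negP wv; apply/negP => /andP [vu wu].
by case/orP: (ancestor_total vu wu).
Qed.

Lemma subtree_size_lt v w : ancestor f v w -> v != w -> subtree_size f w < subtree_size f v.
Proof.
move=> vw v_w; rewrite /subtree_size (bigD1 v) //= [X in _ < X](bigD1 v) //=.
rewrite ancestor_refl add1n ltnS.
have /negbTE -> : ~~ ancestor f w v.
  by apply: contra v_w => wv; rewrite (ancestor_anti vw wv).
apply: leq_sum => x _; have [wx|] // := boolP (ancestor f w x).
by rewrite (ancestor_trans vw wx).
Qed.

Lemma ancestor_of_root v w (r : 'I_n) : r = 0 :> nat -> ancestor f v r -> ancestor f v w.
Proof. by move=> r0 /ancestor_leq; rewrite r0 leqn0 => /eqP; apply: ancestor_root. Qed.

Lemma incomparable_subtree_size v w :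
  incomparable f v w -> subtree_size f v + subtree_size f w < n.
Proof.
move=> vw; pose r := Ordinal rectree_gt0.
have [vr wr] : ~~ ancestor f v r /\ ~~ ancestor f w r.
  case/andP: vw => vw wv.
  by split; [apply: contra vw | apply: contra wv]; apply: ancestor_of_root.
rewrite /subtree_size -big_split /= -[X in _ < X]card_ord -sum1_card (bigD1 r) //=.
rewrite [X in _ < X](bigD1 r) //=.
rewrite (negbTE vr) (negbTE wr) add1n ltnS; apply: leq_sum => x _.
by have := incomparable_not_ancestor2 x vw; case: (ancestor f v x); case: (ancestor f w x).
Qed.

Lemma incomparable_same_size v w :
  v != w -> subtree_size f v = subtree_size f w -> incomparable f v w.
Proof.
move=> vw szE; apply/andP; split; apply/negP => anc.
  by have := subtree_size_lt anc vw; lia.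
by rewrite eq_sym in vw; have := subtree_size_lt anc vw; lia.
Qed.

End Ancestry.

Section SizeCounts.

Variable n : nat.
Implicit Types (f : {ffun 'I_n -> 'I_n}) (v w : 'I_n).

Definition nodes_of_size f k : nat := \sum_v (subtree_size f v == k).

Definition incomparable_pairs f a b : nat :=
  \sum_v \sum_w ((subtree_size f v == a) * (subtree_size f w == b) * incomparable f v w).

Lemma incomparable_pairsC f a b : incomparable_pairs f a b = incomparable_pairs f b a.
Proof.
rewrite /incomparable_pairs exchange_big; apply: eq_bigr => v _.
by apply: eq_bigr => w _; rewrite /incomparable andbC [(_ == a) * _]mulnC.
Qed.

Variable f : {ffun 'I_n -> 'I_n}.
Hypothesis f_rec : is_rectree f.

Lemma incomparable_pairs_eq0 a b : n <= a + b -> incomparable_pairs f a b = 0.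
Proof.
move=> nab; apply: big1 => v _; apply: big1 => w _.
have [vw|] := boolP (incomparable f v w); last by rewrite muln0.
by have := incomparable_subtree_size f_rec vw; do 2 case: eqP => //=; lia.
Qed.

Lemma incomparable_pairs_diag k :
  incomparable_pairs f k k + nodes_of_size f k = nodes_of_size f k * nodes_of_size f k.
Proof.
rewrite /incomparable_pairs /nodes_of_size big_distrl -big_split /=; apply: eq_bigr => v _.
have [vk|] := eqVneq (subtree_size f v) k; last by rewrite big1 // => w _; rewrite mul0n.
rewrite mul1n (bigD1 v) //= [in RHS](bigD1 v) //= incomparablexx // muln0 vk eqxx add0n.
rewrite addnC; congr (_ + _); apply: eq_bigr => w wv.
have [wk|] := eqVneq (subtree_size f w) k; last by rewrite muln0.
by rewrite mul1n incomparable_same_size 1?eq_sym // vk wk.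
Qed.

Lemma nodes_of_size_le_pairs k :
  2 * nodes_of_size f k <= 2 * (0 < nodes_of_size f k) + incomparable_pairs f k k.
Proof.
have := incomparable_pairs_diag k.
(* 2 x <= 2 + x (x - 1) for every natural x >= 1 *)
by case: (nodes_of_size f k) (incomparable_pairs f k k) => [|x] W /=; nia.
Qed.

End SizeCounts.

(** * Grafting a new leaf *)

Lemma big_ord_recr_lift (R : Type) (idx : R) (op : Monoid.law idx) m (F : 'I_m.+1 -> R) :
  \big[op/idx]_(i < m.+1) F i = op (\big[op/idx]_(j < m) F (lift ord_max j)) (F ord_max).
Proof.
rewrite big_ord_recr; congr (op _ _); apply: eq_bigr => j _.
by congr F; apply: ord_inj; rewrite lift_max.
Qed.

Section Graft.

Variable m : nat.
Implicit Types (f : {ffun 'I_m -> 'I_m}) (p v w : 'I_m).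

(* The new node [ord_max] becomes a child of [p]; the old nodes are embedded by
   [lift ord_max], which keeps their labels. *)
Definition graft f p : {ffun 'I_m.+1 -> 'I_m.+1} :=
  [ffun i => if unlift ord_max i is Some j then lift ord_max (f j) else lift ord_max p].

Lemma graft_lift f p v : graft f p (lift ord_max v) = lift ord_max (f v).
Proof. by rewrite ffunE liftK. Qed.

Lemma graft_max f p : graft f p ord_max = lift ord_max p.
Proof. by rewrite ffunE unlift_none. Qed.

Lemma iter_graft_lift f p j v :
  iter j (graft f p) (lift ord_max v) = lift ord_max (iter j f v).
Proof. by elim: j => //= j ->; rewrite graft_lift. Qed.

Lemma graft_inj : injective (fun fp : {ffun 'I_m -> 'I_m} * 'I_m => graft fp.1 fp.2).
Proof.
move=> [f p] [f' p'] /= E; congr pair; last first.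
  by apply: (@lift_inj _ ord_max); rewrite -(graft_max f) -(graft_max f') E.
apply/ffunP => v; apply: (@lift_inj _ ord_max).
by rewrite -(graft_lift f p) -(graft_lift f' p') E.
Qed.

Variables (f : {ffun 'I_m -> 'I_m}) (p : 'I_m).
Hypothesis f_rec : is_rectree f.

Lemma graft_rectree : is_rectree (graft f p).
Proof.
apply/andP; split => //; apply/forallP => i.
have [v ->|->] := unliftP ord_max i; last first.
  by rewrite graft_max lift_max; have := ltn_ord p; case: eqP => /=; lia.
rewrite graft_lift !lift_max; have [v0|v0] := eqVneq (v : nat) 0.
  by rewrite rectree_root.
exact: rectree_parent_lt.
Qed.

Lemma ancestor_graft_lift v w :
  ancestor (graft f p) (lift ord_max v) (lift ord_max w) = ancestor f v w.
Proof.
apply/(ancestorP graft_rectree)/(ancestorP f_rec) => -[j].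
  by rewrite iter_graft_lift => /lift_inj <-; exists j.
by move=> <-; exists j; rewrite iter_graft_lift.
Qed.

Lemma ancestor_graft_lift_max v : ancestor (graft f p) (lift ord_max v) ord_max = ancestor f v p.
Proof.
apply/(ancestorP graft_rectree)/(ancestorP f_rec) => -[j].
  case: j => [/eqP|j]; first by rewrite (negbTE (@neq_lift m.+1 ord_max v)).
  by rewrite iterSr graft_max iter_graft_lift => /lift_inj <-; exists j.
by move=> <-; exists j.+1; rewrite iterSr graft_max iter_graft_lift.
Qed.

Lemma ancestor_graft_max_lift w : ancestor (graft f p) ord_max (lift ord_max w) = false.
Proof.
apply/negbTE/negP => /(ancestorP graft_rectree) [j].
by rewrite iter_graft_lift => /esym/eqP; rewrite (negbTE (@neq_lift m.+1 ord_max _)).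
Qed.

Lemma subtree_size_graft_lift v :
  subtree_size (graft f p) (lift ord_max v) = subtree_size f v + ancestor f v p.
Proof.
rewrite /subtree_size big_ord_recr_lift ancestor_graft_lift_max; congr (_ + _).
by apply: eq_bigr => w _; rewrite ancestor_graft_lift.
Qed.

Lemma subtree_size_graft_max : subtree_size (graft f p) ord_max = 1.
Proof.
rewrite /subtree_size big_ord_recr_lift ancestor_refl ?big1 // => [w _|].
  by rewrite ancestor_graft_max_lift.
exact: graft_rectree.
Qed.

End Graft.

Lemma rectree_graft_surj m (g : {ffun 'I_m.+2 -> 'I_m.+2}) : is_rectree g ->
  exists2 fp : {ffun 'I_m.+1 -> 'I_m.+1} * 'I_m.+1, is_rectree fp.1 & g = graft fp.1 fp.2.
Proof.
move=> g_rec.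
have g_lift (j : 'I_m.+1) : g (lift ord_max j) < m.+1.
  by have := rectree_parent_le g_rec (lift ord_max j); rewrite lift_max; have := ltn_ord j; lia.
have g_max : g ord_max < m.+1 by have := rectree_parent_le g_rec ord_max; rewrite /=; lia.
pose f := [ffun j => Ordinal (g_lift j)].
have f_rec : is_rectree f.
  apply/andP; split => //; apply/forallP => j; rewrite ffunE /=.
  have := rectree_parent_le g_rec (lift ord_max j).
  have := rectree_root g_rec (v := lift ord_max j).
  rewrite !lift_max; case: eqP => [j0 gj _|j0 _]; last by lia.
  by apply/eqP/ord_inj; rewrite /= gj // lift_max.
exists (f, Ordinal g_max) => //; apply/ffunP => i; apply: ord_inj.
have [j ->|->] := unliftP ord_max i; first by rewrite graft_lift ffunE lift_max.
by rewrite graft_max lift_max.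
Qed.

Lemma big_rectree_graft (R : Type) (idx : R) (op : Monoid.com_law idx) m
    (F : {ffun 'I_m.+2 -> 'I_m.+2} -> R) :
  \big[op/idx]_(g | is_rectree g) F g =
  \big[op/idx]_(f : {ffun 'I_m.+1 -> 'I_m.+1} | is_rectree f)
     \big[op/idx]_(p < m.+1) F (graft f p).
Proof.
pose D := [pred fp : {ffun 'I_m.+1 -> 'I_m.+1} * 'I_m.+1 | is_rectree fp.1].
rewrite pair_big_dep (eq_bigl [in D]) => [|fp]; last by rewrite inE andbT.
rewrite -(big_imset _ (in2W (@graft_inj _))) /=.
apply: eq_bigl => g; apply/idP/imsetP => [/rectree_graft_surj //|[fp f_rec ->]].
exact: graft_rectree.
Qed.

Lemma sum_negb (I : finType) (P : pred I) : \sum_i ~~ P i = #|I| - \sum_i P i.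
Proof.
rewrite -sum1_card; apply/eqP; rewrite -(eqn_add2r (\sum_i P i)) subnK -?big_split /=.
  by apply/eqP/eq_bigr => i _; rewrite addn_negb.
by apply: leq_sum => i _; apply: leq_b1.
Qed.

Lemma eq_addb_sub1 (s k : nat) (b : bool) : 0 < k ->
  (s + b == k) = if b then s == k - 1 else s == k.
Proof. by case: b => k_gt0; apply/eqP/eqP; lia. Qed.

Section GraftCounts.

Variables (m : nat) (f : {ffun 'I_m -> 'I_m}).
Hypothesis f_rec : is_rectree f.
Local Notation sz := (subtree_size f).

Lemma sum_eq_subtree_size_graft v k : 0 < k ->
  \sum_(p < m) (sz v + ancestor f v p == k) =
  (sz v == k) * (m - k) + (sz v == k - 1) * (k - 1).
Proof.
move=> k_gt0; have E p : (sz v + ancestor f v p == k) =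
    (sz v == k) * ~~ ancestor f v p + (sz v == k - 1) * ancestor f v p :> nat.
  by rewrite eq_addb_sub1 //; case: (ancestor f v p); rewrite ?muln0 ?muln1 ?addn0.
under eq_bigr => p _ do rewrite E.
rewrite big_split -!big_distrr /= sum_negb card_ord -/(sz v).
by case: eqP => h1; case: eqP => h2 /=; lia.
Qed.

Lemma sum_eq_subtree_size_graft_not_ancestor v k :
  \sum_(p < m) (sz v + ancestor f v p == k) * ~~ ancestor f v p = (sz v == k) * (m - k).
Proof.
have E p : (sz v + ancestor f v p == k) * ~~ ancestor f v p = (sz v == k) * ~~ ancestor f v p.
  by case: (ancestor f v p); rewrite ?addn0 ?muln0.
under eq_bigr => p _ do rewrite E.
by rewrite -big_distrr sum_negb card_ord -/(sz v); case: eqP => // ->.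
Qed.

Lemma nodes_of_size_graft p k :
  nodes_of_size (graft f p) k = \sum_v (sz v + ancestor f v p == k) + (1 == k).
Proof.
rewrite /nodes_of_size big_ord_recr_lift subtree_size_graft_max //; congr (_ + _).
by apply: eq_bigr => v _; rewrite subtree_size_graft_lift.
Qed.

Lemma sum_nodes_of_size_graft k : 0 < k ->
  \sum_(p < m) nodes_of_size (graft f p) k =
  (m - k) * nodes_of_size f k + (k - 1) * nodes_of_size f (k - 1) + m * (k == 1).
Proof.
move=> k_gt0; under eq_bigr => p _ do rewrite nodes_of_size_graft.
rewrite big_split /= exchange_big sum_nat_const card_ord eq_sym !big_distrr -big_split /=.
congr (_ + _); apply: eq_bigr => v _; rewrite sum_eq_subtree_size_graft //.
by case: eqP => h1; case: eqP => h2 /=; lia.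
Qed.

Lemma incomparable_graft_lift p v w :
  incomparable (graft f p) (lift ord_max v) (lift ord_max w) = incomparable f v w.
Proof. by rewrite /incomparable !ancestor_graft_lift. Qed.

Lemma incomparable_graft_lift_max p v :
  incomparable (graft f p) (lift ord_max v) ord_max = ~~ ancestor f v p.
Proof. by rewrite /incomparable ancestor_graft_lift_max // ancestor_graft_max_lift // andbT. Qed.

Lemma incomparable_graft_max_lift p w :
  incomparable (graft f p) ord_max (lift ord_max w) = ~~ ancestor f w p.
Proof. by rewrite /incomparable ancestor_graft_lift_max // ancestor_graft_max_lift. Qed.

Lemma incomparable_pairs_graft p a b : incomparable_pairs (graft f p) a b =
  \sum_v \sum_w
     ((sz v + ancestor f v p == a) * (sz w + ancestor f w p == b) * incomparable f v w)
  + \sum_v ((sz v + ancestor f v p == a) * (1 == b) * ~~ ancestor f v p)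
  + \sum_w ((1 == a) * (sz w + ancestor f w p == b) * ~~ ancestor f w p).
Proof.
rewrite /incomparable_pairs.
under eq_bigr => v _ do rewrite big_ord_recr_lift.
rewrite big_ord_recr_lift big_split /= subtree_size_graft_max //.
rewrite incomparablexx ?graft_rectree // muln0 addn0.
congr (_ + _ + _); apply: eq_bigr => v _.
- by apply: eq_bigr => w _; rewrite !subtree_size_graft_lift // incomparable_graft_lift.
- by rewrite subtree_size_graft_lift // incomparable_graft_lift_max.
- by rewrite subtree_size_graft_lift // incomparable_graft_max_lift.
Qed.

Lemma sum_eq_subtree_size_graft2 v w a b : 0 < a -> 0 < b -> incomparable f v w ->
  \sum_(p < m) ((sz v + ancestor f v p == a) * (sz w + ancestor f w p == b)) =
  (sz v == a) * (sz w == b) * (m - a - b) + (sz v == a - 1) * (sz w == b) * (a - 1)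
  + (sz v == a) * (sz w == b - 1) * (b - 1).
Proof.
move=> a_gt0 b_gt0 vw.
have E p : (sz v + ancestor f v p == a) * (sz w + ancestor f w p == b) =
    (sz v == a) * (sz w == b) * (~~ ancestor f v p && ~~ ancestor f w p)
    + (sz v == a - 1) * (sz w == b) * ancestor f v p
    + (sz v == a) * (sz w == b - 1) * ancestor f w p.
  have := incomparable_not_ancestor2 f_rec p vw; rewrite !eq_addb_sub1 //.
  by case: (ancestor f v p); case: (ancestor f w p); rewrite //= ?muln0 ?muln1 ?addn0.
have sum_out : \sum_(p < m) (~~ ancestor f v p && ~~ ancestor f w p) = m - sz v - sz w.
  suff : \sum_(p < m) (~~ ancestor f v p && ~~ ancestor f w p) + sz v + sz w = m by lia.
  rewrite /subtree_size -!big_split -[RHS]card_ord -sum1_card; apply: eq_bigr => p _.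
  have := incomparable_not_ancestor2 f_rec p vw.
  by case: (ancestor f v p); case: (ancestor f w p).
under eq_bigr => p _ do rewrite E.
rewrite !big_split -!big_distrr /= sum_out -/(sz v) -/(sz w).
by do 4 case: eqP => ? /=; lia.
Qed.

Lemma sum_incomparable_pairs_graft a b : 0 < a -> 0 < b ->
  \sum_(p < m) incomparable_pairs (graft f p) a b =
  (a - 1) * incomparable_pairs f (a - 1) b + (b - 1) * incomparable_pairs f a (b - 1)
  + (m - a - b) * incomparable_pairs f a b
  + (a == 1) * ((m - b) * nodes_of_size f b) + (b == 1) * ((m - a) * nodes_of_size f a).
Proof.
move=> a_gt0 b_gt0; under eq_bigr => p _ do rewrite incomparable_pairs_graft.
rewrite !big_split /=.
have old_old : \sum_(p < m) \sum_v \sum_w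
    ((sz v + ancestor f v p == a) * (sz w + ancestor f w p == b) * incomparable f v w) =
  (a - 1) * incomparable_pairs f (a - 1) b + (b - 1) * incomparable_pairs f a (b - 1)
  + (m - a - b) * incomparable_pairs f a b.
  rewrite exchange_big /incomparable_pairs !big_distrr -!big_split /=; apply: eq_bigr => v _.
  rewrite exchange_big !big_distrr -!big_split /=; apply: eq_bigr => w _.
  rewrite -big_distrl /=; have [vw|] := boolP (incomparable f v w); last by rewrite !muln0.
  rewrite sum_eq_subtree_size_graft2 // !muln1.
  have := subtree_size_gt0 f_rec v; have := subtree_size_gt0 f_rec w.
  by do 4 case: eqP => ? /=; lia.
have old_new : \sum_(p < m) \sum_v
    ((sz v + ancestor f v p == a) * (1 == b) * ~~ ancestor f v p) =
  (b == 1) * ((m - a) * nodes_of_size f a).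
  rewrite exchange_big /nodes_of_size !big_distrr; apply: eq_bigr => v _ /=.
  under eq_bigr => p _ do rewrite mulnAC.
  by rewrite -big_distrl /= sum_eq_subtree_size_graft_not_ancestor [1 == b]eq_sym; lia.
have new_old : \sum_(p < m) \sum_w
    ((1 == a) * (sz w + ancestor f w p == b) * ~~ ancestor f w p) =
  (a == 1) * ((m - b) * nodes_of_size f b).
  rewrite exchange_big /nodes_of_size !big_distrr; apply: eq_bigr => w _ /=.
  under eq_bigr => p _ do rewrite -mulnA.
  by rewrite -big_distrr /= sum_eq_subtree_size_graft_not_ancestor [1 == a]eq_sym; lia.
by rewrite old_old old_new new_old; lia.
Qed.

End GraftCounts.

(** * First and second moments of the subtree-size profile *)

(* Divided by [nrectree n], these totals are expectations over a uniformly
   random recursive tree of size [n]; for a = b = k the second one is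
   E X_k (X_k - 1) by [incomparable_pairs_diag]. *)
Definition nrectree n := \sum_(f : {ffun 'I_n -> 'I_n} | is_rectree f) 1.

Definition total_nodes_of_size n k :=
  \sum_(f : {ffun 'I_n -> 'I_n} | is_rectree f) nodes_of_size f k.

Definition total_incomparable_pairs n a b :=
  \sum_(f : {ffun 'I_n -> 'I_n} | is_rectree f) incomparable_pairs f a b.

Lemma nrectree_gt0 n : 0 < n -> 0 < nrectree n.
Proof.
case: n => // m _; have star_rec : is_rectree [ffun i : 'I_m.+1 => ord0].
  apply/andP; split => //; apply/forallP => i; rewrite ffunE.
  by case: eqP => [i0|/eqP]; [apply/eqP/ord_inj | rewrite lt0n].
by rewrite /nrectree (bigD1 _ star_rec).
Qed.

Lemma nrectreeS m : nrectree m.+2 = m.+1 * nrectree m.+1.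
Proof.
rewrite /nrectree big_rectree_graft big_distrr /=; apply: eq_bigr => f _.
by rewrite sum1_card card_ord muln1.
Qed.

Lemma total_nodes_of_sizeS m k : 0 < k ->
  total_nodes_of_size m.+2 k = (m.+1 - k) * total_nodes_of_size m.+1 k
    + (k - 1) * total_nodes_of_size m.+1 (k - 1) + m.+1 * (k == 1) * nrectree m.+1.
Proof.
move=> k_gt0; rewrite /total_nodes_of_size /nrectree big_rectree_graft.
rewrite !big_distrr -!big_split /=; apply: eq_bigr => f f_rec.
by rewrite sum_nodes_of_size_graft // muln1.
Qed.

Lemma total_incomparable_pairsS m a b : 0 < a -> 0 < b ->
  total_incomparable_pairs m.+2 a b =
    (a - 1) * total_incomparable_pairs m.+1 (a - 1) b
  + (b - 1) * total_incomparable_pairs m.+1 a (b - 1)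
  + (m.+1 - a - b) * total_incomparable_pairs m.+1 a b
  + (a == 1) * (m.+1 - b) * total_nodes_of_size m.+1 b
  + (b == 1) * (m.+1 - a) * total_nodes_of_size m.+1 a.
Proof.
move=> a_gt0 b_gt0; rewrite /total_incomparable_pairs /total_nodes_of_size big_rectree_graft.
rewrite !big_distrr -!big_split /=; apply: eq_bigr => f f_rec.
by rewrite sum_incomparable_pairs_graft // !mulnA.
Qed.

Lemma total_incomparable_pairsC n a b :
  total_incomparable_pairs n a b = total_incomparable_pairs n b a.
Proof. by apply: eq_bigr => f _; apply: incomparable_pairsC. Qed.

Lemma total_incomparable_pairs_eq0 n a b : n <= a + b -> total_incomparable_pairs n a b = 0.
Proof. by move=> nab; apply: big1 => f f_rec; apply: incomparable_pairs_eq0. Qed.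

Lemma total_nodes_of_sizeE n k : 0 < k < n ->
  total_nodes_of_size n k * (k * k.+1) = n * nrectree n.
Proof.
elim: n k => [|[|m] IH] k /andP [k_gt0 k_lt]; try by lia.
rewrite total_nodes_of_sizeS // nrectreeS.
set R := nrectree m.+1; set A := total_nodes_of_size m.+1.
have old_k : (m.+1 - k) * A k * (k * k.+1) = (m.+1 - k) * (m.+1 * R).
  have [km|mk] := ltnP k m.+1; first by rewrite -mulnA IH ?k_gt0.
  by rewrite (eqP (_ : m.+1 - k == 0)) ?subn_eq0.
have [k1|k_ne1] := eqVneq k 1.
  by move: old_k; rewrite k1 subnn /= mul0n addn0 mul1n; nia.
have old_k1 : A (k - 1) * ((k - 1) * k) = m.+1 * R.
  by rewrite -(IH (k - 1)); [congr (_ * (_ * _)) | apply/andP; split]; lia.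
by move: old_k old_k1; rewrite ?muln0 ?mul0n ?addn0; nia.
Qed.

Lemma total_incomparable_pairs_le n a b : 0 < a -> 0 < b ->
  total_incomparable_pairs n a b * (a * a.+1 * (b * b.+1)) <= n * n * nrectree n.
Proof.
elim: n a b => [|[|m] IH] a b a_gt0 b_gt0;
  try by rewrite total_incomparable_pairs_eq0 ?mul0n //; lia.
have [ab_big|ab_lt] := leqP m.+2 (a + b).
  by rewrite total_incomparable_pairs_eq0 ?mul0n.
set R := nrectree m.+1; set A := total_nodes_of_size m.+1.
set B := total_incomparable_pairs m.+1.
have graft_part c d : 0 < c -> 0 < d -> c + d <= m.+1 ->
    ((c - 1) * B (c - 1) d + (c == 1) * (m.+1 - d) * A d) * (c * c.+1 * (d * d.+1))
    <= c.+1 * (m.+1 * (m.+1 * R)).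
  move=> c_gt0 d_gt0 cd_le; have [c1|c_ne1] := eqVneq c 1.
    have := total_nodes_of_sizeE (_ : 0 < d < m.+1); rewrite -/A -/R c1 /=; nia.
  have := IH (c - 1) d; rewrite -/B -/R (_ : (c - 1).+1 = c); nia.
rewrite total_incomparable_pairsS // nrectreeS -/R -/A -/B.
have := graft_part a b a_gt0 b_gt0; have := graft_part b a b_gt0 a_gt0.
have := IH a b a_gt0 b_gt0; rewrite -/R -/B [B (b - 1) a]total_incomparable_pairsC -/B.
have [c mE] : exists c, m.+1 = a + b + c by exists (m.+1 - (a + b)); lia.
rewrite (_ : m.+1 - a - b = c); last by lia.
clear graft_part; move: (B _ _) (B _ _) (B _ _) (A a) (A b) R => Bab Bab1 Ba1b Aa Ab r.
(* The [graft_part] terms for [a] and [b] are at most (a+1)(m+1)^2 r and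
   (b+1)(m+1)^2 r, the others c(m+1)^2 r, and (m+1)(a+1 + b+1 + c) <= (m+2)^2. *)
nia.
Qed.

Lemma nrectree_le_occupied n k : 0 < k < n -> n <= k * k.+1 <= 2 * n ->
  nrectree n <= 4 * \sum_(f : {ffun 'I_n -> 'I_n} | is_rectree f) (0 < nodes_of_size f k).
Proof.
move=> k_range /andP [n_le n_ge]; have [k_gt0 _] := andP k_range.
have mean := total_nodes_of_sizeE k_range.
have pairs := total_incomparable_pairs_le n k_gt0 k_gt0.
have moment : 2 * total_nodes_of_size n k <=
    2 * (\sum_(f : {ffun 'I_n -> 'I_n} | is_rectree f) (0 < nodes_of_size f k))
    + total_incomparable_pairs n k k.
  rewrite /total_nodes_of_size /total_incomparable_pairs !big_distrr -big_split /=.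
  by apply: leq_sum => f f_rec; apply: nodes_of_size_le_pairs.
move: mean pairs moment n_le n_ge; have : 0 < k * k.+1 by rewrite muln_gt0 k_gt0.
move: (k * k.+1) (nrectree n) (total_nodes_of_size n k) => q R A q_gt0 meanE.
move: (total_incomparable_pairs n k k) (\sum_(f | _) _) => B C pairs moment n_le n_ge.
have B_le : B <= A.
  rewrite -(leq_pmul2r (_ : 0 < q * q)) ?muln_gt0 ?q_gt0 //.
  apply: leq_trans pairs _; rewrite -mulnA -meanE [A * (q * q)]mulnA [A * q * q]mulnC.
  by rewrite leq_mul2r n_le orbT.
have R_le : R <= 2 * A.
  rewrite -(leq_pmul2l (_ : 0 < n)); last by lia.
  by rewrite -meanE mulnCA mulnA [A * q]mulnC leq_mul2r n_ge orbT.
lia.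
Qed.

(** * Distinct fringe shapes *)

(* The shape is arbitrary when no node has subtree size [k]. *)
Definition shape_of_size n (f : {ffun 'I_n -> 'I_n}) k : tree :=
  if [pick v | subtree_size f v == k] is Some v then canon (fringe_shape f v) else Node [::].

Lemma shape_of_sizeP n (f : {ffun 'I_n -> 'I_n}) k : 0 < nodes_of_size f k ->
  exists2 v, shape_of_size f k = canon (fringe_shape f v) & subtree_size f v = k.
Proof.
rewrite /shape_of_size; case: pickP => [v /eqP vk|none]; first by exists v.
by rewrite /nodes_of_size big1 // => v _; rewrite none.
Qed.

Lemma occupied_sizes_le_count e n (f : {ffun 'I_n -> 'I_n}) (P : pred tree) (I : seq nat) :
  enumerates_polya e -> is_rectree f -> uniq I -> {in I, forall k, k <= n} ->
  (forall t, tree_size t \in I -> P t) ->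
  \sum_(k <- I) (0 < nodes_of_size f k) <= count (fun t => P t && has_fringe f t) (e n).
Proof.
move=> e_polya f_rec I_uniq I_le I_P.
have shape_size k : 0 < nodes_of_size f k -> tree_size (shape_of_size f k) = k.
  by case/shape_of_sizeP => v -> <-; rewrite tree_size_canon tree_size_fringe.
have -> : \sum_(k <- I) (0 < nodes_of_size f k) = count (fun k => 0 < nodes_of_size f k) I.
  by rewrite -sumn_count sumnE big_map.
rewrite -!size_filter -(size_map (shape_of_size f)); apply: uniq_leq_size.
  rewrite map_inj_in_uniq ?filter_uniq // => k1 k2.
  rewrite !mem_filter => /andP [/shape_size s1 _] /andP [/shape_size s2 _] E.
  by rewrite -s1 -s2 E.
move=> t /mapP [k]; rewrite mem_filter => /andP [k_occ kI] ->.
have [v shapeE vk] := shape_of_sizeP k_occ.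
rewrite mem_filter I_P ?shape_size //; have [_ ->] := e_polya n.
rewrite shape_size // I_le //.
rewrite /polya shapeE canon_idem eqxx !andbT; apply/existsP; exists v.
by rewrite /same_shape canon_idem.
Qed.

Definition nfringe n t := \sum_(f : {ffun 'I_n -> 'I_n} | is_rectree f) has_fringe f t.

Lemma nrectree_le_fringe_window e n (P : pred tree) :
  enumerates_polya e -> 100 <= n ->
  (forall t, Nat.sqrt n < tree_size t <= Nat.sqrt n + Nat.sqrt n %/ 4 -> P t) ->
  Nat.sqrt n %/ 4 * nrectree n <= 4 * \sum_(t <- e n | P t) nfringe n t.
Proof.
move=> e_polya n_ge P_window; set s := Nat.sqrt n.
have /andP [s_lo s_hi] : s * s <= n < s.+1 * s.+1.
  by have := Nat.sqrt_spec' n; rewrite -/s => -[? ?]; apply/andP; split; apply/leP.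
have s_ge : 10 <= s by nia.
have q_le : s %/ 4 * 4 <= s := leq_divM s 4.
pose I := iota s.+1 (s %/ 4).
have I_range k : k \in I -> 0 < k < n /\ n <= k * k.+1 <= 2 * n.
  by rewrite mem_iota => /andP [k_lo k_hi]; split; apply/andP; split; nia.
rewrite -[s %/ 4](size_iota s.+1) -sum1_size big_distrl /= mul1n.
apply: (@leq_trans (4 * \sum_(k <- I) \sum_(f : {ffun 'I_n -> 'I_n} | is_rectree f)
    (0 < nodes_of_size f k))).
  rewrite big_distrr big_seq [X in _ <= X]big_seq; apply: leq_sum => k /I_range [].
  exact: nrectree_le_occupied.
rewrite leq_mul2l /nfringe exchange_big [X in _ <= X]exchange_big /=.
apply: leq_sum => f f_rec.
have -> : \sum_(t <- e n | P t) (has_fringe f t : nat) =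
    count (fun t => P t && has_fringe f t) (e n).
  by rewrite -sum1_count big_mkcondr; apply: eq_bigr => t _; case: has_fringe.
apply: occupied_sizes_le_count; rewrite ?iota_uniq //.
  by move=> k /I_range [/andP [_ /ltnW]].
by move=> t tI; apply: P_window; move: tI; rewrite mem_iota; lia.
Qed.

(** * Asymptotics *)

Local Open Scope R_scope.

Lemma ln_le_sqrt_eventually (c : R) : 0 < c ->
  exists N : nat, forall n : nat, (N <= n)%N -> ln (INR n) <= c * sqrt (INR n).
Proof.
move=> c_gt0; pose eps := mkposreal _ (Rdiv_lt_0_compat _ _ c_gt0 Rlt_0_2).
have [M lnM] := proj2 (is_lim_spec _ _ _) is_lim_div_ln_p eps.
have [N MN] := INR_archimed 1 (Rmax M 1) Rlt_0_1; rewrite Rmult_1_r in MN.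
exists (N * N)%N => n nN.
have sqrt_big : Rmax M 1 < sqrt (INR n).
  apply: (Rlt_le_trans _ _ _ MN); rewrite -(sqrt_square (INR N)); last exact: pos_INR.
  by apply: sqrt_le_1_alt; rewrite -mult_INR; apply/le_INR/leP.
have y_gt0 : 0 < sqrt (INR n) by have := Rmax_r M 1; lra.
have := lnM _ (Rle_lt_trans _ _ _ (Rmax_l M 1) sqrt_big); rewrite Rminus_0_r /=.
move=> /Rabs_def2 [lt_c _].
have lnE : ln (INR n) = 2 * ln (sqrt (INR n)).
  by rewrite -{1}(sqrt_sqrt (INR n) (pos_INR n)) ln_mult //; lra.
have := Rmult_lt_compat_r _ _ _ y_gt0 lt_c.
rewrite /Rdiv Rmult_assoc Rinv_l ?Rmult_1_r; last lra.
by move=> h; rewrite lnE; lra.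
Qed.

Lemma log_base_le_sqrt_eventually (b : R) :
  exists N : nat, forall n : nat, (N <= n)%N -> log_base b (INR n) <= sqrt (INR n).
Proof.
rewrite /log_base; have [lnb_le|lnb_gt] := Rle_lt_dec (ln b) 0.
  exists 1%N => n n_ge1.
  have ln_ge0 : 0 <= ln (INR n).
    by rewrite -ln_1; apply: ln_le; [lra | apply: (le_INR 1); apply/leP].
  have inv_le0 : / ln b <= 0.
    have [lnb_lt|->] := Rle_lt_or_eq_dec _ _ lnb_le; last by rewrite Rinv_0; lra.
    by left; apply: Rinv_lt_0_compat.
  by have := sqrt_pos (INR n); rewrite /Rdiv; nra.
have [N lnN] := ln_le_sqrt_eventually lnb_gt; exists N => n /lnN ln_le.
by apply/Rle_div_l => //; lra.
Qed.

Lemma one_minus_coef_ratio t n : (0 < n)%N ->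
  1 - coef_S t n / coef_T n = INR (nfringe n t) / INR (nrectree n).
Proof.
move=> n_gt0.
have card_rec : #|[set f : {ffun 'I_n -> 'I_n} | is_rectree f]| = nrectree n.
  by rewrite -sum1dep_card.
have card_split : nrectree n =
    (#|[set f : {ffun 'I_n -> 'I_n} | is_rectree f && ~~ has_fringe f t]| + nfringe n t)%N.
  rewrite -sum1dep_card /nrectree (bigID (fun f => has_fringe f t)) /= addnC; congr (_ + _)%N.
  by rewrite /nfringe big_mkcondr; apply: eq_bigr => f _; case: has_fringe.
have R_gt0 : 0 < INR (nrectree n) by apply/lt_0_INR/ltP/nrectree_gt0.
have fact_gt0 : 0 < INR n`! by apply/lt_0_INR/ltP/fact_gt0.
rewrite /coef_S /coef_T card_rec; move: R_gt0; rewrite card_split plus_INR => R_gt0.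
by field; lra.
Qed.

Lemma big_INR_div (T : Type) (s : seq T) (P : pred T) (g : T -> nat) (r : R) :
  \big[Rplus/0]_(t <- s | P t) (INR (g t) / r) = INR (\sum_(t <- s | P t) g t) / r.
Proof.
elim: s => [|a s IH]; first by rewrite !big_nil /Rdiv Rmult_0_l.
by rewrite !big_cons; case: (P a); rewrite // IH plus_INR /Rdiv Rmult_plus_distr_r.
Qed.

Lemma INR_div_le (q a b : nat) : (0 < b)%N -> (q * b <= 4 * a)%N ->
  INR q / 4 <= INR a / INR b.
Proof.
move=> b_gt0 /leP/le_INR; rewrite !mult_INR => le_qb.
have : 0 < INR b by apply/lt_0_INR/ltP.
move: le_qb; rewrite (_ : INR 4 = 4); last by rewrite /=; lra.
move=> le_qb b_pos; apply: (Rmult_le_reg_r (4 * INR b)); first lra.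
have -> : INR q / 4 * (4 * INR b) = INR q * INR b by field.
by have -> : INR a / INR b * (4 * INR b) = 4 * INR a by field; lra.
Qed.

Lemma sqrt_le_window_size n : (100 <= n)%N ->
  1 / 32 * sqrt (INR n) <= INR (Nat.sqrt n %/ 4) / 4.
Proof.
move=> n_ge; set s := Nat.sqrt n.
have /andP [s_lo s_hi] : (s * s <= n < s.+1 * s.+1)%N.
  by have := Nat.sqrt_spec' n; rewrite -/s => -[? ?]; apply/andP; split; apply/leP.
have s_ge : (10 <= s)%N by nia.
have sqrt_lt : sqrt (INR n) < INR s.+1.
  rewrite -(sqrt_square (INR s.+1)); last exact: pos_INR.
  by apply: sqrt_lt_1_alt; split; [exact: pos_INR | rewrite -mult_INR; apply/lt_INR/ltP].
have q_ge : INR s <= 4 * INR (s %/ 4) + 3.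
  have : (s <= 4 * (s %/ 4) + 3)%N.
    by have := divn_eq s 4; have := ltn_pmod s (isT : (0 < 4)%N); lia.
  by move/leP/le_INR; rewrite plus_INR mult_INR /=; lra.
have : INR 10 <= INR s by apply/le_INR/leP.
rewrite (_ : INR 10 = 10); last by rewrite /=; lra.
by rewrite S_INR in sqrt_lt; lra.
Qed.

Lemma sqrt_INR_le (n k : nat) : (n <= k * k)%N -> sqrt (INR n) <= INR k.
Proof.
move=> /leP/le_INR; rewrite mult_INR => n_le.
by rewrite -(sqrt_square (INR k)); [apply: sqrt_le_1_alt | apply: pos_INR].
Qed.

Theorem proposition2p9 (e : nat -> seq tree) :
  enumerates_polya e ->
  exists c : R, Rlt 0 c /\ exists N : nat, forall n : nat, (N <= n)%N ->
    Rle (Rmult c (sqrt (INR n)))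
        (\big[Rplus/R0]_(t <- e n
                         | Rleb (log_base (Rinv (sigma_of e)) (INR n))
                                (INR (tree_size t)))
           (Rminus R1 (Rdiv (coef_S t n) (coef_T n)))).
Proof.
(* Every logarithm is eventually below sqrt n: the value of sigma is irrelevant. *)
move=> e_polya; have [N logN] := log_base_le_sqrt_eventually (/ sigma_of e).
exists (1 / 32); split; first lra.
exists (N + 100)%N => n n_ge; have n_gt0 : (0 < n)%N by lia.
rewrite (eq_bigr _ (fun t _ => one_minus_coef_ratio t n_gt0)) big_INR_div.
have n_ge100 : (100 <= n)%N by lia.
apply: Rle_trans (sqrt_le_window_size n_ge100) (INR_div_le (nrectree_gt0 n_gt0) _).
apply: nrectree_le_fringe_window => // t /andP [t_big _].
rewrite /Rleb; case: Rle_dec => // -[]; apply: Rle_trans (logN n _) _; first lia.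
by apply: sqrt_INR_le; apply: ltnW; apply/ltP/Nat.sqrt_lt_square/ltP.
Qed.
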